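(* Let $(A,\circ)$ be a Novikov algebra, $\{a,b\}=a\circ b+b\circ a$, $[a,b]=a\circ b-b\circ a$, and $(a,b,c)^+=\{a,\{b,c\}\}-\{\{a,b\},c\}$. Then for all $a,b,c,d\in A$, $$\{(a,b,c)^+,d\}-\{(a,d,c)^+,b\}=\{[c,a],[b,d]\}.$$
   Context: A (right) Novikov algebra is an algebra $(A,\circ)$ satisfying $a\circ(b\circ c)-(a\circ b)\circ c=a\circ(c\circ b)-(a\circ c)\circ b$ and $a\circ(b\circ c)=b\circ(a\circ c)$ for all $a,b,c$. *)

From mathcomp Require Import all_boot all_algebra.
Set Implicit Arguments. Unset Strict Implicit. Unset Printing Implicit Defensive.
Import GRing.Theory.
Local Open Scope ring_scope.

Definition bilinear_prod (R : comNzRingType) (A : lmodType R) (m : A -> A -> A) :=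
  (forall a b c, m (a + b) c = m a c + m b c) /\
  (forall a b c, m a (b + c) = m a b + m a c) /\
  (forall (k : R) a b, m (k *: a) b = k *: m a b) /\
  (forall (k : R) a b, m a (k *: b) = k *: m a b).

Definition novikov (A : zmodType) (m : A -> A -> A) :=
  (forall a b c, m a (m b c) - m (m a b) c = m a (m c b) - m (m a c) b) /\
  (forall a b c, m a (m b c) = m b (m a c)).

Definition anticomm (A : zmodType) (m : A -> A -> A) (a b : A) := m a b + m b a.
Definition comm (A : zmodType) (m : A -> A -> A) (a b : A) := m a b - m b a.
Definition assocp (A : zmodType) (m : A -> A -> A) (a b c : A) :=
  anticomm m a (anticomm m b c) - anticomm m (anticomm m a b) c.

From mathcomp Require Import all_boot all_algebra.
Set Implicit Arguments.
Unset Strict Implicit.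
Unset Printing Implicit Defensive.

Import GRing.Theory.
Local Open Scope ring_scope.

(* Left commutativity and right symmetry give the key identity
   (x z) y - (y z) x = {z, [x, y]}.  From it, the anticommutator associator
   collapses to (a, b, c)^+ = {[c, a], b}, and the operators R_x := {-, x}
   satisfy R_d R_b - R_b R_d = R_[b, d].  Applying the latter to [c, a] is the
   theorem. *)

Section NovikovRing.

Variables (A : zmodType) (m : A -> A -> A).

Hypotheses (mulmDl : forall x y z, m (x + y) z = m x z + m y z)
           (mulmDr : forall x y z, m x (y + z) = m x y + m x z).
Hypotheses (mulm_rsym : forall x y z,
              m x (m y z) - m (m x y) z = m x (m z y) - m (m x z) y)
           (mulmCA : forall x y z, m x (m y z) = m y (m x z)).

Lemma mulmBl x y z : m (x - y) z = m x z - m y z.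
Proof. by apply: (addIr (m y z)); rewrite -mulmDl !subrK. Qed.

Lemma mulmBr x y z : m x (y - z) = m x y - m x z.
Proof. by apply: (addIr (m x z)); rewrite -mulmDr !subrK. Qed.

Lemma mulmAC x y z : m (m x y) z = m (m x z) y + m x (comm m y z).
Proof. by rewrite /comm mulmBr addrCA -opprB -mulm_rsym opprB subrKC. Qed.

Lemma mulm_comm_rotate x y z :
  m x (comm m z y) - m y (comm m z x) = m z (comm m x y).
Proof.
rewrite /comm !mulmBr (mulmCA x z y) (mulmCA y z x) (mulmCA x y z).
by rewrite opprB subrKA.
Qed.

Lemma mulm_swap_outer x y z :
  m (m x z) y - m (m y z) x = anticomm m z (comm m x y).
Proof.
rewrite (mulmAC x z y) (mulmAC y z x) opprD addrACA -mulmBl mulm_comm_rotate.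
exact: addrC.
Qed.

Lemma anticommC x y : anticomm m x y = anticomm m y x.
Proof. exact: addrC. Qed.

Lemma anticommB x y u v :
  anticomm m x y - anticomm m u v = (m x y - m v u) + (m y x - m u v).
Proof. by rewrite /anticomm [m u v + _]addrC opprD addrACA. Qed.

Lemma assocpE a b c : assocp m a b c = anticomm m (comm m c a) b.
Proof.
have inner : m a (anticomm m b c) - m c (anticomm m a b) = - m b (comm m c a).
  (* Unapplied, [mulmDr] would also unfold [comm m c a] on the right. *)
  rewrite /anticomm (mulmDr a) (mulmDr c).
  rewrite (mulmCA c a b) (mulmCA a b c) (mulmCA c b a) addrKA.
  by rewrite /comm mulmBr opprB.
have outer : m (anticomm m b c) a - m (anticomm m a b) c
             = m b (comm m c a) + anticomm m b (comm m c a).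
  rewrite /anticomm (mulmDl (m b c)) (mulmDl (m a b)) [m (m a b) c + _]addrC.
  rewrite opprD addrACA (mulmAC b c a) [m (m b a) c + _]addrC.
  by rewrite addrK mulm_swap_outer.
by rewrite /assocp anticommB inner outer addKr anticommC.
Qed.

Lemma anticommAC_comm e b d :
  anticomm m (anticomm m e b) d - anticomm m (anticomm m e d) b
  = anticomm m e (comm m b d).
Proof.
have right_part : m (anticomm m e b) d - m (anticomm m e d) b
                  = anticomm m e (comm m b d) + m e (comm m b d).
  rewrite /anticomm (mulmDl (m e b)) (mulmDl (m e d)) opprD addrACA.
  by rewrite mulm_swap_outer (mulmAC e b d) [m (m e d) b + _]addrC addrK addrC.
have left_part :
    m d (anticomm m e b) - m b (anticomm m e d) = - m e (comm m b d).
  rewrite /anticomm (mulmDr d) (mulmDr b) opprD addrACA.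
  rewrite (mulmCA d e b) (mulmCA b e d) (mulmCA d b e) subrr.
  by rewrite addr0 /comm mulmBr opprB.
rewrite [anticomm m (anticomm m e d) b]anticommC anticommB.
by rewrite right_part left_part addrK.
Qed.

End NovikovRing.

Theorem mainTheorem10 (R : comNzRingType) (A : lmodType R) (m : A -> A -> A) :
  bilinear_prod m -> novikov m ->
  forall a b c d : A,
    anticomm m (assocp m a b c) d - anticomm m (assocp m a d c) b
    = anticomm m (comm m c a) (comm m b d).
Proof.
move=> [mDl [mDr _]] [rsym lcomm] a b c d.
by rewrite !(assocpE mDl mDr rsym lcomm) (anticommAC_comm mDl mDr rsym lcomm).
Qed.
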